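(* For every $j\in[n-1]$, the geometric crystal operator $\bar e_j^c$ on $\mathrm{GT}_n^{\le m}$ preserves shape: $\mathrm{sh}(\bar e_j^c(\mathbf{z}))=\mathrm{sh}(\mathbf{z})$ as rational functions of $\mathbf{z}$ and $c$.
   Context: $\mathrm{GT}_n^{\le m}$ is the torus of arrays $\mathbf{z}=(z_{i,j})$, $z_{i,j}\in\mathbb{C}^*$, $1\le i\le m$, $i\le j\le n$; $p=\min(m,n)$ and $\mathrm{sh}(\mathbf{z})=(z_{1,n},\dots,z_{p,n})$. $E_{a,b}$ is a matrix unit, $x_j(a)=I+aE_{j,j+1}$, and $\Delta_I(A)$ is the minor of an $n\times n$ matrix $A$ with rows $I$ and columns $[1,|I|]$ ($\Delta_\emptyset=1$). $W^i(y_i,\dots,y_n)=\sum_{k<i}E_{kk}+\sum_{k\ge i}y_kE_{kk}+\sum_{k=i}^{n-1}E_{k+1,k}$; $\Phi(\mathbf{z})=W^p(z_{p,p},\frac{z_{p,p+1}}{z_{p,p}},\dots,\frac{z_{p,n}}{z_{p,n-1}})\cdots W^1(z_{1,1},\frac{z_{1,2}}{z_{1,1}},\dots,\frac{z_{1,n}}{z_{1,n-1}})$; $\Psi(A)=(\Delta_{[i,j]}(A)/\Delta_{[i+1,j]}(A))_{1\le i\le m,\,i\le j\le n}$. With $A=\Phi(\mathbf{z})$: $\bar\varepsilon_j(\mathbf{z})=A_{j+1,j+1}/A_{j+1,j}$, $\bar\varphi_j(\mathbf{z})=A_{j,j}/A_{j+1,j}$, and $\bar e_j^c(\mathbf{z})=\Psi\big(x_j((c-1)\bar\varphi_j(\mathbf{z}))\,A\,x_j((c^{-1}-1)\bar\varepsilon_j(\mathbf{z}))\big)$.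 *)

(* All indices i, j, k of the paper are 1-based naturals;
   matrix entries are accessed through [ent], which is 0-based. *)
From mathcomp Require Import all_boot all_order all_algebra.
Set Implicit Arguments. Unset Strict Implicit. Unset Printing Implicit Defensive.
Import Order.TTheory GRing.Theory Num.Theory.
Local Open Scope ring_scope.

Section GT.
Variable C : fieldType.

Definition ent n (A : 'M[C]_n) (r s : nat) : C :=
  if @insub nat (fun x => (x < n)%N) 'I_n r is Some i then
    (if @insub nat (fun x => (x < n)%N) 'I_n s is Some k then A i k else 0)
  else 0.

Definition Emx n (a b : nat) : 'M[C]_n :=
  \matrix_(r, s) ((r.+1 == a) && (s.+1 == b))%:R.

Definition xmx n (j : nat) (a : C) : 'M[C]_n := 1%:M + a *: Emx n j j.+1.

(* W^i(y_i,...,y_n), with y given as a function of the 1-based index k *)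
Definition Wmx n (i : nat) (y : nat -> C) : 'M[C]_n :=
  \matrix_(r, s)
    (if r == s :> nat then (if (r.+1 < i)%N then 1 else y r.+1)
     else if (r == s.+1 :> nat) && (i <= s.+1)%N then 1 else 0).

Definition Wargs (z : nat -> nat -> C) (i : nat) (k : nat) : C :=
  if k == i then z i i else z i k / z i k.-1.

Fixpoint Phi_aux n (z : nat -> nat -> C) (k : nat) : 'M[C]_n :=
  match k with
  | 0 => 1%:M
  | k'.+1 => Wmx n k (Wargs z k) *m Phi_aux n z k'
  end.

Definition Phi m n (z : nat -> nat -> C) : 'M[C]_n := Phi_aux n z (minn m n).

(* Delta_{[a,b]}(A): rows a..b, columns 1..(b-a+1) (1-based); equals 1 if b < a *)
Definition minorI n (A : 'M[C]_n) (a b : nat) : C :=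
  let k := (b.+1 - a)%N in
  \det (\matrix_(r < k, s < k) ent A (a.-1 + r)%N s).

Definition Psi n (A : 'M[C]_n) : nat -> nat -> C :=
  fun i j => minorI A i j / minorI A i.+1 j.

Definition epsbar m n (j : nat) (z : nat -> nat -> C) : C :=
  ent (Phi m n z) j j / ent (Phi m n z) j j.-1.
Definition phibar m n (j : nat) (z : nat -> nat -> C) : C :=
  ent (Phi m n z) j.-1 j.-1 / ent (Phi m n z) j j.-1.

Definition ebar_mx m n (j : nat) (c : C) (z : nat -> nat -> C) : 'M[C]_n :=
  xmx n j ((c - 1) * phibar m n j z) *m Phi m n z
    *m xmx n j ((c^-1 - 1) * epsbar m n j z).

Definition ebar m n (j : nat) (c : C) (z : nat -> nat -> C) : nat -> nat -> C :=
  Psi (ebar_mx m n j c z).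

Definition sh m n (z : nat -> nat -> C) : seq C :=
  [seq z i n | i <- iota 1 (minn m n)].

End GT.

(* Psi(A)_{i,n} is the ratio of the bottom-left minors Delta_{[i,n]}(A) and
   Delta_{[i+1,n]}(A), and bottom-left minors are unchanged when A is multiplied
   on either side by an upper unitriangular matrix such as x_j(a).  Hence the
   shape of bar-e_j^c(z) is read off the bottom-left minors of Phi(z).  Each
   W^i is lower bidiagonal and is the identity on its first i-1 rows and
   columns, so a one-term Cauchy-Binet expansion peels off one factor at a time
   and gives Delta_{[r+1,n]}(Phi(z)) = z_{r+1,n} ... z_{p,n}, whose consecutive
   ratios are the z_{i,n}. *)

From mathcomp Require Import all_boot all_order all_algebra zify.
Set Implicit Arguments. Unset Strict Implicit. Unset Printing Implicit Defensive.
Import Order.TTheory GRing.Theory Num.Theory.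
Local Open Scope ring_scope.

Section TriangularDet.
Variable C : fieldType.

Lemma det_mx_lower k (f : nat -> nat -> C) :
  (forall i j, (i < j < k)%N -> f i j = 0) ->
  \det (\matrix_(i < k, j < k) f i j) = \prod_(i < k) f i i.
Proof.
move=> f0; rewrite det_trig; first by apply: eq_bigr => i _; rewrite mxE.
by apply/is_trig_mxP => i j lt_ij; rewrite mxE f0 // lt_ij ltn_ord.
Qed.

Lemma det_mx_upper k (f : nat -> nat -> C) :
  (forall i j, (j < i < k)%N -> f i j = 0) ->
  \det (\matrix_(i < k, j < k) f i j) = \prod_(i < k) f i i.
Proof.
move=> f0; rewrite -det_tr.
have -> : (\matrix_(i < k, j < k) f i j)^T = \matrix_(i < k, j < k) f j i.
  by apply/matrixP => i j; rewrite !mxE.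
by rewrite (@det_mx_lower k (fun i j => f j i)) // => i j; apply: f0.
Qed.

Lemma det_mx_first_row_unit k (f : nat -> nat -> C) :
  (forall j, (j < k.+1)%N -> f 0%N j = (j == 0%N)%:R) ->
  \det (\matrix_(i < k.+1, j < k.+1) f i j) =
  \det (\matrix_(i < k, j < k) f i.+1 j.+1).
Proof.
move=> f0; rewrite (expand_det_row _ ord0) big_ord_recl big1 ?addr0; last first.
  by move=> i _; rewrite mxE f0 // mul0r.
rewrite mxE f0 // eqxx mul1r /cofactor /= expr0 mul1r.
by congr (\det _); apply/matrixP => i j; rewrite !mxE !lift0.
Qed.

End TriangularDet.

Section Minors.
Variables (C : fieldType) (n : nat).
Implicit Types (A X Y U : 'M[C]_n).

Lemma entE A (i k : 'I_n) : ent A i k = A i k.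
Proof.
rewrite /ent; case: insubP => [i' _ i'E|]; last by rewrite ltn_ord.
case: insubP => [k' _ k'E|]; last by rewrite ltn_ord.
by congr (A _ _); apply: val_inj.
Qed.

Lemma ent_out_row A r s : (n <= r)%N -> ent A r s = 0.
Proof. by move=> le_nr; rewrite /ent; case: insubP => // u; rewrite ltnNge le_nr. Qed.

Lemma ent_out_col A r s : (n <= s)%N -> ent A r s = 0.
Proof.
move=> le_ns; rewrite /ent; case: insubP => // u _ _.
by case: insubP => // v; rewrite ltnNge le_ns.
Qed.

Lemma ent_mulmx X Y r s :
  ent (X *m Y) r s = \sum_(t < n) ent X r t * ent Y t s.
Proof.
have [lt_rn|le_nr] := ltnP r n; last first.
  by rewrite ent_out_row // big1 // => t _; rewrite ent_out_row ?mul0r.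
have [lt_sn|le_ns] := ltnP s n; last first.
  by rewrite ent_out_col // big1 // => t _; rewrite (ent_out_col Y) ?mulr0.
rewrite (entE _ (Ordinal lt_rn) (Ordinal lt_sn)) !mxE; apply: eq_bigr => t _.
by rewrite (entE X (Ordinal lt_rn) t) (entE Y t (Ordinal lt_sn)).
Qed.

Lemma ent_scalar1 r s : (r < n)%N -> (s < n)%N ->
  ent (1%:M : 'M[C]_n) r s = (r == s)%:R.
Proof. by move=> lt_rn lt_sn; rewrite (entE _ (Ordinal lt_rn) (Ordinal lt_sn)) mxE. Qed.

Definition minor A r c k := \det (\matrix_(i < k, j < k) ent A (r + i) (c + j)).

Lemma minorI_minor A r : minorI A r.+1 n = minor A r 0 (n - r).
Proof. by rewrite /minorI /minor subSS. Qed.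

(* A one-term Cauchy-Binet formula. *)
Lemma minor_mulmx X Y r c c' k : (c' + k <= n)%N ->
  (forall i j t, (i < k)%N -> (j < k)%N -> (t < n)%N ->
     (t < c')%N || (c' + k <= t)%N -> ent X (r + i) t * ent Y t (c + j) = 0) ->
  minor (X *m Y) r c k = minor X r c' k * minor Y c' c k.
Proof.
move=> le_n XY0; rewrite /minor -det_mulmx; congr (\det _); apply/matrixP => i j.
rewrite !mxE ent_mulmx.
rewrite -(big_mkord xpredT (fun t => ent X (r + i) t * ent Y t (c + j))).
rewrite (@big_cat_nat _ _ _ c') ?leq0n ?(leq_trans (leq_addr k c')) //=.
rewrite (@big_cat_nat _ _ _ (c' + k) c') ?leq_addr //=.
rewrite [X in X + _]big1_seq ?add0r; last first.
  move=> t /andP[_]; rewrite mem_index_iota => /andP[_ lt_tc].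
  by apply: XY0; rewrite ?lt_tc //; lia.
rewrite [X in _ + X]big1_seq ?addr0; last first.
  move=> t /andP[_]; rewrite mem_index_iota => /andP[le_t lt_tn].
  by apply: XY0; rewrite ?le_t ?orbT.
rewrite -{1}[c']add0n big_addn addKn big_mkord.
by apply: eq_bigr => t _; rewrite !mxE [(t + _)%N]addnC.
Qed.

Definition upper_unitri U := forall r s, (s <= r < n)%N -> ent U r s = (r == s)%:R.

Lemma minor_upper_unitri U r k : upper_unitri U -> (r + k <= n)%N ->
  minor U r r k = 1.
Proof.
move=> Uu le_n; rewrite /minor (@det_mx_upper _ _ (fun i j => ent U (r + i) (r + j))).
  by rewrite big1 // => i _; rewrite Uu ?eqxx //; have := ltn_ord i; lia.
by move=> i j /andP[lt_ji lt_ik]; rewrite Uu ?eqn_add2l ?(gtn_eqF lt_ji) //; lia.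
Qed.

Lemma minor_corner_upper_unitri_mull U A r : upper_unitri U -> (r <= n)%N ->
  minor (U *m A) r 0 (n - r) = minor A r 0 (n - r).
Proof.
move=> Uu le_rn; rewrite (@minor_mulmx _ _ _ _ r) ?subnKC //.
  by rewrite minor_upper_unitri ?mul1r ?subnKC.
move=> i j t lt_i _ lt_tn /orP[lt_tr|]; last by lia.
by rewrite Uu ?gtn_eqF ?mul0r //; lia.
Qed.

Lemma minor_corner_upper_unitri_mulr U A r : upper_unitri U -> (r <= n)%N ->
  minor (A *m U) r 0 (n - r) = minor A r 0 (n - r).
Proof.
move=> Uu le_rn; rewrite (@minor_mulmx _ _ _ _ 0) ?leq_subr //.
  by rewrite [minor U _ _ _]minor_upper_unitri ?mulr1 //; lia.
move=> i j t _ lt_j lt_tn /orP[//|le_t].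
by rewrite Uu ?gtn_eqF ?mulr0 //; lia.
Qed.

Lemma minorI_upper_unitri_mul U A V r : upper_unitri U -> upper_unitri V -> (r <= n)%N ->
  minorI (U *m A *m V) r.+1 n = minorI A r.+1 n.
Proof.
move=> Uu Vu le_rn.
by rewrite !minorI_minor minor_corner_upper_unitri_mulr ?minor_corner_upper_unitri_mull.
Qed.

Lemma xmx_upper_unitri j a : upper_unitri (xmx n j a).
Proof.
move=> r s /andP[le_sr lt_rn].
have lt_sn := leq_ltn_trans le_sr lt_rn.
rewrite (entE _ (Ordinal lt_rn) (Ordinal lt_sn)) !mxE -val_eqE /= eqSS.
by case: (r.+1 =P j) => [<-|_]; rewrite /= ?(@ltn_eqF s r.+1) ?mulr0 ?addr0.
Qed.

Definition lead_id b A :=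
  forall r s, (r < b)%N || (s < b)%N -> (r < n)%N -> (s < n)%N ->
    ent A r s = (r == s)%:R.

Lemma lead_id1 b : lead_id b 1%:M.
Proof. by move=> r s _; apply: ent_scalar1. Qed.

Lemma lead_id_mulmx b X Y : lead_id b X -> lead_id b Y -> lead_id b (X *m Y).
Proof.
move=> idX idY r s lead lt_rn lt_sn; rewrite ent_mulmx.
have sum_at t0 (f : nat -> C) : (t0 < n)%N ->
    (forall t, (t < n)%N -> t != t0 -> f t = 0) -> \sum_(t < n) f t = f t0.
  move=> lt_t0 f0; rewrite (bigD1 (Ordinal lt_t0)) //= big1 ?addr0 // => t ne_t.
  exact: f0 (ltn_ord t) ne_t.
case/orP: lead => lead.
  rewrite (sum_at r (fun t => ent X r t * ent Y t s)) => [|//|t lt_tn ne_tr].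
    by rewrite idX ?lead // eqxx mul1r idY ?lead.
  by rewrite idX ?lead // eq_sym (negbTE ne_tr) mul0r.
rewrite (sum_at s (fun t => ent X r t * ent Y t s)) => [|//|t lt_tn ne_ts].
  by rewrite idY ?lead ?orbT // eqxx mulr1 idX ?lead ?orbT.
by rewrite idY ?lead ?orbT // (negbTE ne_ts) mulr0.
Qed.

End Minors.

Section PhiMinors.
Variables (C : fieldType) (m n : nat) (z : nat -> nat -> C).
Hypothesis z_neq0 :
  forall i k : nat, (1 <= i <= m)%N -> (i <= k <= n)%N -> z i k != 0.

(* 0-based: [Wfac b] is the factor W^(b+1) of Phi, and
   [Wprod b len = W^(b+len) ... W^(b+1)]. *)
Definition Wfac b : 'M[C]_n := Wmx n b.+1 (Wargs z b.+1).

Fixpoint Wprod b len : 'M[C]_n :=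
  if len is l.+1 then Wfac (b + l) *m Wprod b l else 1%:M.

Lemma Phi_auxE k : Phi_aux n z k = Wprod 0 k.
Proof. by elim: k => //= k ->; rewrite add0n. Qed.

Lemma WprodSr b len : Wprod b len.+1 = Wprod b.+1 len *m Wfac b.
Proof.
elim: len => [|len IH]; first by rewrite /= addn0 mulmx1 mul1mx.
rewrite -[Wprod b len.+2]/(Wfac (b + len.+1) *m Wprod b len.+1) IH mulmxA.
by rewrite -addSnnS.
Qed.

Lemma ent_Wfac b r s : (r < n)%N -> (s < n)%N ->
  ent (Wfac b) r s = if r == s then (if (r < b)%N then 1 else Wargs z b.+1 r.+1)
                     else if (r == s.+1) && (b <= s)%N then 1 else 0.
Proof.
by move=> lt_rn lt_sn; rewrite (entE _ (Ordinal lt_rn) (Ordinal lt_sn)) mxE /= !ltnS.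
Qed.

Lemma ent_Wfac_off b r s : r != s -> r != s.+1 -> ent (Wfac b) r s = 0.
Proof.
move=> ne_rs ne_rSs; have [lt_rn|] := ltnP r n; last exact: ent_out_row.
have [lt_sn|] := ltnP s n; last exact: ent_out_col.
by rewrite ent_Wfac // (negbTE ne_rs) (negbTE ne_rSs).
Qed.

Lemma ent_Wfac_sub b s : (s.+1 < n)%N -> (b <= s)%N -> ent (Wfac b) s.+1 s = 1.
Proof.
move=> lt_sn le_bs; rewrite ent_Wfac ?(ltnW lt_sn) //.
by rewrite (gtn_eqF (ltnSn s)) eqxx le_bs.
Qed.

Lemma ent_Wfac_diag b r : (b <= r < n)%N -> ent (Wfac b) r r = Wargs z b.+1 r.+1.
Proof. by case/andP=> le_br lt_rn; rewrite ent_Wfac // eqxx ltnNge le_br. Qed.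

Lemma lead_id_Wfac b' b : (b' <= b)%N -> lead_id b' (Wfac b).
Proof.
move=> le_b r s lead lt_rn lt_sn; rewrite ent_Wfac //.
have [r_eq|_] := eqVneq r s.
  by rewrite (_ : (r < b)%N) //; case/orP: lead; lia.
rewrite (_ : (r == s.+1) && (b <= s)%N = false) //.
by apply/negbTE/negP => /andP[/eqP r_eq le_bs]; case/orP: lead; lia.
Qed.

Lemma lead_id_Wprod b len : lead_id b (Wprod b len).
Proof.
elim: len => [|len IH] /=; first exact: lead_id1.
by apply: lead_id_mulmx => //; apply: lead_id_Wfac; rewrite leq_addr.
Qed.

Lemma prod_Wargs a k : (1 <= a <= m)%N -> (a + k <= n)%N ->
  \prod_(i < k.+1) Wargs z a (a + i) = z a (a + k).
Proof.
move=> a_in; elim: k => [|k IH] le_n; first by rewrite big_ord1 /Wargs addn0 eqxx.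
rewrite big_ord_recr /= IH; last by lia.
rewrite /Wargs (_ : (a + k.+1 == a) = false); last by apply/negbTE; lia.
by rewrite addnS /= mulrC divfK //; apply: z_neq0; lia.
Qed.

Lemma minor_WprodS_gt b len r : (b < r <= n)%N ->
  minor (Wprod b len.+1) r b (n - r) = minor (Wprod b.+1 len) r b.+1 (n - r).
Proof.
move=> /andP[lt_br le_rn]; rewrite WprodSr (@minor_mulmx _ _ _ _ _ _ b.+1); last 2 first.
- lia.
- move=> i j t lt_i lt_j lt_tn /orP[lt_tb|le_t].
    by rewrite lead_id_Wprod ?lt_tb ?orbT ?gtn_eqF ?mul0r //; lia.
  by rewrite ent_Wfac_off ?mulr0 //; apply/eqP; lia.
rewrite [minor (Wfac b) _ _ _]/minor.
rewrite (@det_mx_upper _ _ (fun i j => ent (Wfac b) (b.+1 + i) (b + j))) => [|i j ij_lt].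
  rewrite big1 ?mulr1 // => i _; have := ltn_ord i => lt_i.
  by rewrite addSn ent_Wfac_sub //; lia.
by rewrite ent_Wfac_off //; apply/eqP; lia.
Qed.

Lemma minor_WprodS_eq b len : (b < minn m n)%N ->
  minor (Wprod b len.+1) b b (n - b) =
  z b.+1 n * minor (Wprod b.+1 len) b.+1 b.+1 (n - b.+1).
Proof.
rewrite leq_min => /andP[lt_bm lt_bn].
rewrite WprodSr (@minor_mulmx _ _ _ _ _ _ b); last 2 first.
- lia.
- move=> i j t lt_i lt_j lt_tn /orP[lt_tb|]; last by lia.
  by rewrite lead_id_Wprod ?(ltnW lt_tb) ?orbT ?gtn_eqF ?mul0r //; lia.
have -> : (n - b = (n - b.+1).+1)%N by lia.
rewrite mulrC; congr (_ * _).
  rewrite /minor (@det_mx_lower _ _ (fun i j => ent (Wfac b) (b + i) (b + j)))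
    => [|i j ij_lt]; last by rewrite ent_Wfac_off //; apply/eqP; lia.
  rewrite (eq_bigr (fun i : 'I__ => Wargs z b.+1 (b.+1 + i))) => [|i _]; last first.
    by rewrite ent_Wfac_diag ?addnS //; have := ltn_ord i; lia.
  by rewrite prod_Wargs; [congr (z _ _) | |]; lia.
rewrite /minor.
rewrite (@det_mx_first_row_unit _ _ (fun i j => ent (Wprod b.+1 len) (b + i) (b + j))).
  by congr (\det _); apply/matrixP => i j; rewrite !mxE !addnS.
move=> j lt_j; rewrite addn0 lead_id_Wprod ?ltnSn //; last by lia.
by case: j lt_j => [|j] lt_j; rewrite ?addn0 ?eqxx // ltn_eqF //; lia.
Qed.

Lemma minor_Wprod b len r : (b + len <= minn m n)%N -> (b <= r <= b + len)%N ->
  minor (Wprod b len) r b (n - r) = \prod_(r <= l < b + len) z l.+1 n.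
Proof.
elim: len b r => [|len IH] b r le_p r_in.
  have -> : r = b by lia.
  rewrite addn0 big_geq // /minor -(@det1 C (n - b)).
  congr (\det _); apply/matrixP => i j.
  move: (ltn_ord i) (ltn_ord j) => lt_i lt_j.
  by rewrite !mxE ent_scalar1 ?eqn_add2l //; lia.
have [lt_br|le_rb] := ltnP b r.
  rewrite minor_WprodS_gt; last by lia.
  rewrite IH addSnnS //; lia.
have -> : r = b by lia.
rewrite minor_WprodS_eq; last by lia.
by rewrite IH addSnnS ?(@big_ltn _ _ _ b) //; lia.
Qed.

Lemma minorI_Phi r : (r <= minn m n)%N ->
  minorI (Phi m n z) r.+1 n = \prod_(r <= l < minn m n) z l.+1 n.
Proof.
move=> le_rp; rewrite minorI_minor /Phi Phi_auxE minor_Wprod //; lia.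
Qed.

End PhiMinors.

Theorem lemma3p6 (C : numClosedFieldType) (m n j : nat) :
  (1 <= j <= n.-1)%N ->
  forall (z : nat -> nat -> C) (c : C),
    (forall i k : nat, (1 <= i <= m)%N -> (i <= k <= n)%N -> z i k != 0) ->
    c != 0 ->
    ent (Phi m n z) j j.-1 != 0 ->
    (forall i : nat, (1 <= i <= minn m n)%N ->
       minorI (ebar_mx m n j c z) i.+1 n != 0) ->
    sh m n (ebar m n j c z) = sh m n z.
Proof.
move=> _ z c z_neq0 _ _ _; apply/eq_in_map => -[|i]; rewrite mem_iota // => /andP[_].
rewrite add1n ltnS => lt_ip; have lt_in : (i < n)%N := leq_trans lt_ip (geq_minr m n).
have xU (a : C) : upper_unitri (xmx n j a) by apply: xmx_upper_unitri.
rewrite /ebar /Psi /ebar_mx !minorI_upper_unitri_mul ?(ltnW lt_in) //.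
rewrite !minorI_Phi ?(ltnW lt_ip) // (@big_ltn _ _ _ i) // mulfK // prodf_seq_neq0.
by apply/allP => l; rewrite mem_index_iota => l_in; apply/implyP => _; apply: z_neq0; lia.
Qed.
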